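(* Let $Y$ be an acyclicity property. If $\mathrm{aGRD}\not\subseteq Y$, then $Y\subset Y^D$ (i.e. $Y\subseteq Y^D$ and there is a set of rules satisfying $Y^D$ but not $Y$).
   Context: Existential rules, $GRD(\mathcal R)$, positions and position graphs $PG^F$, $PG^D$ as usual: $PG^F(\mathcal R)$ is the basic position graph (edges from each frontier body position to each head position with same term or existential position) plus edges from each $k$-th head position of $R_i$ to each $k$-th body position of $R_j$ with same predicate; $PG^D(\mathcal R)$ keeps such transition edges only if there is a path from $R_i$ to $R_j$ in $GRD(\mathcal R)$, where $R_j$ depends on $R_i$ iff some application of $R_i$ to some atomset enables a new useful application of $R_j$. An acyclicity property is given by a marking function $Y$ assigning to each node of a position graph a subset of its successors; $Y^X$ holds for $\mathcal R$ iff $X(\mathcal R)$ contains no cycle through an existential position $[a,i]$ all of whose nodes lie in the marking of $[a,i]$; $Y$ alone denotes $Y^F$. $\mathrm{aGRD}$ is the class of finite rule sets $\mathcal R$ with $GRD(\mathcal R)$ acyclic. $P_1\subseteq P_2$ means every rule set satisfying $P_1$ satisfies $P_2$; $\subset$ is strict inclusion. *)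

From Stdlib Require Import List Arith Relations.
Import ListNotations.

Inductive term := Var (x : nat) | Cst (c : nat).

(* A predicate is identified by its name together with its arity
   (the length of the argument list). *)
Record atom := mkAtom { pname : nat; args : list term }.
Definition pred_of (a : atom) : nat * nat := (pname a, length (args a)).

Record rule := mkRule { body : list atom; head : list atom }.
Definition ruleset := list rule.

Definition term_vars (t : term) : list nat :=
  match t with Var x => [x] | Cst _ => [] end.
Definition atom_vars (a : atom) : list nat := flat_map term_vars (args a).
Definition vars (A : list atom) : list nat := flat_map atom_vars A.

Definition frontier_var (R : rule) (x : nat) : Prop :=
  In x (vars (body R)) /\ In x (vars (head R)).
Definition existential_var (R : rule) (x : nat) : Prop :=
  In x (vars (head R)) /\ ~ In x (vars (body R)).

Definition subst := nat -> term.
Definition subst_term (s : subst) (t : term) : term :=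
  match t with Var x => s x | Cst c => Cst c end.
Definition subst_atom (s : subst) (a : atom) : atom :=
  mkAtom (pname a) (map (subst_term s) (args a)).
Definition subst_atoms (s : subst) (A : list atom) : list atom :=
  map (subst_atom s) A.

Definition is_hom (s : subst) (A F : list atom) : Prop :=
  incl (subst_atoms s A) F.

Definition safe_ext (R : rule) (F : list atom) (pi sigma : subst) : Prop :=
  (forall x, frontier_var R x -> sigma x = pi x) /\
  (forall x, existential_var R x -> exists z, sigma x = Var z /\ ~ In z (vars F)) /\
  (forall x y, existential_var R x -> existential_var R y -> sigma x = sigma y -> x = y).

Definition apply_rule (R : rule) (F : list atom) (sigma : subst) : list atom :=
  F ++ subst_atoms sigma (head R).

Definition useful (R : rule) (F : list atom) (pi : subst) : Prop :=
  ~ exists s, (forall x, In x (vars (body R)) -> s x = pi x) /\ is_hom s (head R) F.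

Definition depends (R1 R2 : rule) : Prop :=
  exists (F : list atom) (pi1 sigma pi2 : subst),
    is_hom pi1 (body R1) F /\ safe_ext R1 F pi1 sigma /\
    is_hom pi2 (body R2) (apply_rule R1 F sigma) /\
    ~ is_hom pi2 (body R2) F /\
    useful R2 (apply_rule R1 F sigma) pi2.

Definition GRD (Rs : ruleset) (i j : nat) : Prop :=
  exists R1 R2, nth_error Rs i = Some R1 /\ nth_error Rs j = Some R2 /\ depends R1 R2.

Definition GRD_path (Rs : ruleset) : nat -> nat -> Prop := clos_trans nat (GRD Rs).

Definition aGRD (Rs : ruleset) : Prop := forall i, ~ GRD_path Rs i i.

(* node = (rule index, head?/body, atom index in that side, position index) *)
Record node := mkNode { nrule : nat; nhead : bool; natom : nat; npos : nat }.

Definition node_rule (Rs : ruleset) (v : node) : option rule := nth_error Rs (nrule v).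

Definition node_atom (Rs : ruleset) (v : node) : option atom :=
  match node_rule Rs v with
  | Some r => nth_error (if nhead v then head r else body r) (natom v)
  | None => None
  end.

Definition node_term (Rs : ruleset) (v : node) : option term :=
  match node_atom Rs v with
  | Some a => nth_error (args a) (npos v)
  | None => None
  end.

Definition existential_pos (Rs : ruleset) (v : node) : Prop :=
  nhead v = true /\
  exists r x, node_rule Rs v = Some r /\ node_term Rs v = Some (Var x) /\
              existential_var r x.

Definition graph := node -> node -> Prop.

Definition basic_edge (Rs : ruleset) (u v : node) : Prop :=
  nhead u = false /\ nhead v = true /\ nrule u = nrule v /\
  exists r x, node_rule Rs u = Some r /\ node_term Rs u = Some (Var x) /\
    frontier_var r x /\
    (node_term Rs v = Some (Var x) \/ existential_pos Rs v).

Definition transition_edge (Rs : ruleset) (u v : node) : Prop :=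
  nhead u = true /\ nhead v = false /\ npos u = npos v /\
  exists a b, node_atom Rs u = Some a /\ node_atom Rs v = Some b /\
    pred_of a = pred_of b /\ npos u < length (args a).

Definition PG_F (Rs : ruleset) : graph :=
  fun u v => basic_edge Rs u v \/ transition_edge Rs u v.

Definition PG_D (Rs : ruleset) : graph :=
  fun u v => basic_edge Rs u v \/
             (transition_edge Rs u v /\ GRD_path Rs (nrule u) (nrule v)).

(* A marking function assigns to each node a of a position graph G (of a rule
   set Rs) a subset mark Rs G a of its successors (nodes reachable from a). *)
Record acyclicity_property := {
  mark : ruleset -> graph -> node -> node -> Prop;
  mark_succ : forall Rs G a b, mark Rs G a b -> clos_trans node G a b;
  mark_mono : forall Rs (G1 G2 : graph), (forall u v, G1 u v -> G2 u v) ->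
              forall a b, mark Rs G1 a b -> mark Rs G2 a b
}.

Definition cycle_within (G : graph) (M : node -> Prop) (a : node) : Prop :=
  clos_trans node (fun u v => G u v /\ M u /\ M v) a a.

Definition satisfies (Y : acyclicity_property) (X : ruleset -> graph) (Rs : ruleset) : Prop :=
  ~ exists a, existential_pos Rs a /\ cycle_within (X Rs) (mark Y Rs (X Rs) a) a.

Definition Y_F (Y : acyclicity_property) : ruleset -> Prop := satisfies Y PG_F.
Definition Y_D (Y : acyclicity_property) : ruleset -> Prop := satisfies Y PG_D.

Definition subclass (P1 P2 : ruleset -> Prop) : Prop := forall Rs, P1 Rs -> P2 Rs.
Definition strict_subclass (P1 P2 : ruleset -> Prop) : Prop :=
  subclass P1 P2 /\ exists Rs, P2 Rs /\ ~ P1 Rs.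

(* Y ⊆ Y^D because PG^D is a subgraph of PG^F and markings are monotone, so
   every marked cycle of PG^D is a marked cycle of PG^F.  For strictness, take
   a rule set with acyclic GRD violating Y: along any path of PG^D the rule
   index either advances along a GRD path, or the path is a single basic edge
   from a body to a head position of one rule, which cannot be closed into a
   cycle.  Hence PG^D has no cycle at all, and the rule set satisfies Y^D. *)
From Stdlib Require Import Relations Classical.

Lemma clos_trans_mono (A : Type) (R1 R2 : relation A) :
  inclusion A R1 R2 -> inclusion A (clos_trans A R1) (clos_trans A R2).
Proof.
  intros incl12 x y; induction 1 as [x y Hxy | x y z _ IHxy _ IHyz].
  - exact (t_step _ _ _ _ (incl12 _ _ Hxy)).
  - exact (t_trans _ _ _ _ _ IHxy IHyz).
Qed.

Lemma satisfies_antimono (Y : acyclicity_property) (X1 X2 : ruleset -> graph) Rs :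
  inclusion node (X1 Rs) (X2 Rs) -> satisfies Y X2 Rs -> satisfies Y X1 Rs.
Proof.
  intros incl12 sat2 [a [exa cyc1]]; apply sat2; exists a; split; [exact exa|].
  refine (clos_trans_mono _ _ _ _ _ _ cyc1).
  intros u v (Euv & Mu & Mv); repeat split.
  - exact (incl12 u v Euv).
  - exact (mark_mono Y Rs _ _ incl12 a u Mu).
  - exact (mark_mono Y Rs _ _ incl12 a v Mv).
Qed.

Lemma PG_D_sub_PG_F Rs : inclusion node (PG_D Rs) (PG_F Rs).
Proof. intros u v [Hb | [Ht _]]; [left | right]; assumption. Qed.

Lemma Y_F_sub_Y_D (Y : acyclicity_property) : subclass (Y_F Y) (Y_D Y).
Proof. intro Rs; apply satisfies_antimono, PG_D_sub_PG_F. Qed.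

Definition PG_D_progress (Rs : ruleset) (u v : node) : Prop :=
  GRD_path Rs (nrule u) (nrule v) \/
  (nrule u = nrule v /\ nhead u = false /\ nhead v = true).

Lemma PG_D_path_progress Rs u v :
  clos_trans node (PG_D Rs) u v -> PG_D_progress Rs u v.
Proof.
  induction 1 as [u v [[Hu [Hv [Huv _]]] | [_ Hgrd]] | u v w _ IHuv _ IHvw].
  - right; auto.
  - left; exact Hgrd.
  - destruct IHuv as [Puv | [Euv [_ Hv]]], IHvw as [Pvw | [Evw [Hv' _]]].
    + left; exact (t_trans _ _ _ _ _ Puv Pvw).
    + left; rewrite <- Evw; exact Puv.
    + left; rewrite Euv; exact Pvw.
    + congruence.
Qed.

Lemma PG_D_acyclic Rs : aGRD Rs -> forall a, ~ clos_trans node (PG_D Rs) a a.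
Proof.
  intros acyc a cyc.
  destruct (PG_D_path_progress _ _ _ cyc) as [Hgrd | [_ [Hbody Hhead]]].
  - exact (acyc _ Hgrd).
  - congruence.
Qed.

Lemma aGRD_sub_Y_D (Y : acyclicity_property) : subclass aGRD (Y_D Y).
Proof.
  intros Rs acyc [a [_ cyc]]; apply (PG_D_acyclic Rs acyc a).
  refine (clos_trans_mono _ _ _ _ _ _ cyc); intros u v [Euv _]; exact Euv.
Qed.

Theorem mainTheorem4 (Y : acyclicity_property) :
  ~ subclass aGRD (Y_F Y) -> strict_subclass (Y_F Y) (Y_D Y).
Proof.
  intro not_sub; split; [exact (Y_F_sub_Y_D Y)|].
  destruct (not_all_ex_not _ _ not_sub) as [Rs HRs].
  destruct (imply_to_and _ _ HRs) as [acyc notYF].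
  exists Rs; split; [exact (aGRD_sub_Y_D Y Rs acyc) | exact notYF].
Qed.
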